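(* Let $\mathcal{I}$ be an index set, and let an incomplete data case be a pair $(\mathbf{x},\mathbf{t})$ where $\mathbf{t}=[t_i]_{i=1}^{|\mathbf{t}|}$ is a finite list of indices in $\mathcal{I}$ and $\mathbf{x}=[x_i]_{i=1}^{|\mathbf{t}|}$ a list of real values. Let $p_{\mathcal{D}}(\mathbf{x},\mathbf{t})$ be a data distribution over incomplete data cases, and let $p_{\mathcal{I}}(\mathbf{t})$ be its marginal distribution over index sets $\mathbf{t}$. Let $p_z(\mathbf{z})$ be a prior distribution over latent codes $\mathbf{z}$, let $g_\theta$ be a deterministic decoder mapping each latent code $\mathbf{z}$ to a function $g_\theta(\mathbf{z})\in\mathbb{R}^{\mathcal{I}}$, and write $g_\theta(\mathbf{z},\mathbf{t}) = [g_\theta(\mathbf{z})(t_i)]_{i=1}^{|\mathbf{t}|}$. Let $q_\phi(\mathbf{z}\mid\mathbf{x},\mathbf{t})$ be a (stochastic) encoder distribution over latent codes. Define the encoder joint distribution as the law of $(\mathbf{x},\mathbf{t},\mathbf{z})$ obtained by drawing $(\mathbf{x},\mathbf{t})\sim p_{\mathcal{D}}$ and then $\mathbf{z}\sim q_\phi(\mathbf{z}\mid\mathbf{x},\mathbf{t})$, and define the decoder joint distribution as the law of $(g_\theta(\mathbf{z},\mathbf{t}),\mathbf{t},\mathbf{z})$ obtained by drawing $\mathbf{z}\sim p_z$ and independently $\mathbf{t}\sim p_{\mathcal{I}}$. Suppose the encoder and decoder achieve the same joint distribution over $(\mathbf{x},\mathbf{t})$ and $\mathbf{z}$, i.e. the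 encoder joint distribution equals the decoder joint distribution. Then for any $(\mathbf{x},\mathbf{t})$ with non-zero probability under $p_{\mathcal{D}}$, if $\mathbf{z}\sim q_\phi(\mathbf{z}\mid\mathbf{x},\mathbf{t})$, we have $g_\theta(\mathbf{z},\mathbf{t})=\mathbf{x}$ almost surely.
   Context: This is the setting of the Partial Bidirectional GAN (P-BiGAN) for incomplete data: complete data are functions $f:\mathcal{I}\to\mathbb{R}$; an incomplete case records the values $x_i=f(t_i)$ at a sampled set of indices $\mathbf{t}$. The complete data $f$ and the indices $\mathbf{t}$ are assumed independent, so the index distribution $p_{\mathcal{I}}(\mathbf{t})$ coincides with the marginal of $\mathbf{t}$ under $p_{\mathcal{D}}$. In density notation, the encoder joint is $p_{\mathrm{enc}}(\mathbf{x},\mathbf{t},\mathbf{z})=p_{\mathcal{D}}(\mathbf{x},\mathbf{t})\,q_\phi(\mathbf{z}\mid\mathbf{x},\mathbf{t})$ and the decoder joint is $p_{\mathrm{dec}}(\mathbf{x},\mathbf{t},\mathbf{z})=p_{\mathcal{I}}(\mathbf{t})\,p_z(\mathbf{z})\,\delta(\mathbf{x}-g_\theta(\mathbf{z},\mathbf{t}))$, with $\delta$ the Dirac delta. *)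

From HB Require Import structures.
From mathcomp Require Import all_boot all_order all_algebra.
From mathcomp Require Import all_classical all_reals all_analysis.
Set Implicit Arguments. Unset Strict Implicit. Unset Printing Implicit Defensive.
Import Order.TTheory GRing.Theory Num.Theory.
Local Open Scope classical_set_scope.
Local Open Scope ring_scope.

Definition seqp (T : choiceType) := seq T.
HB.instance Definition _ (T : choiceType) := Choice.on (seqp T).
HB.instance Definition _ (T : choiceType) := isPointed.Build (seqp T) [::].

(* Measurable cylinders of finite lists over a measurable space T: the lists
   of length n whose k-th entry lies in the measurable set B k (k < n).
   They generate the disjoint-union sigma-algebra  U_n  T^n  (each T^n with
   its product sigma-algebra). *)
Definition seq_cyl d (T : measurableType d) : set (set (seqp T)) :=
  [set A | exists (n : nat) (B : nat -> set T),
     (forall k, measurable (B k)) /\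
     A = [set s : seqp T | size s = n /\
            forall k, (k < n)%N -> B k (nth point s k)]].

Definition seqM d (T : measurableType d) := g_sigma_algebraType (@seq_cyl d T).

(* Incomplete data cases (x, t), encoded as the list of pairs (t_i, x_i);
   t = map fst s, x = map snd s (so |x| = |t| automatically). *)
Definition cases d (I : measurableType d) (R : realType) := seqM [the measurableType _ of (I * R)%type].

Definition dec_case d (I : measurableType d) (R : realType) {Z : Type}
  (g : Z -> I -> R) (t : seq I) (z : Z) : seq (I * R) :=
  [seq (i, g z i) | i <- t].

Definition enc_joint d dZ (I : measurableType d) (R : realType)
  (Z : measurableType dZ) (pD : set (cases I R) -> \bar R)
  (q : cases I R -> {measure set Z -> \bar R}) (A : set (cases I R * Z)) : \bar R :=
  (\int[pD]_s q s (xsection A s))%E.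

Definition dec_joint d dZ (I : measurableType d) (R : realType)
  (Z : measurableType dZ) (pI : set (seqM I) -> \bar R) (pz : set Z -> \bar R)
  (g : Z -> I -> R) (A : set (cases I R * Z)) : \bar R :=
  (pI \x pz)%E [set tz : seqM I * Z |
     A ((dec_case g tz.1 tz.2 : cases I R), tz.2)].

(** The decoder joint law is carried by the graph {((x,t),z) | x = g_theta(z,t)},
    so it gives measure 0 to {s0} x N, where N is the set of codes z whose
    decoding at the indices of s0 differs from the values of s0.  The encoder
    joint law gives the same set measure p_D({s0}) q_phi(N | s0), and since
    p_D({s0}) > 0 this forces q_phi(N | s0) = 0. *)
From HB Require Import structures.
From mathcomp Require Import all_boot all_order all_algebra.
From mathcomp Require Import all_classical all_reals all_analysis.
Import Order.TTheory GRing.Theory Num.Theory.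
Local Open Scope classical_set_scope.
Local Open Scope ring_scope.

Lemma measurable_map_eq dZ dV (Z : measurableType dZ) (V : measurableType dV)
    (I : Type) (g : Z -> I -> V) :
  (forall v : V, measurable [set v]) ->
  (forall i, measurable_fun setT (g ^~ i)) ->
  forall (t : seq I) (l : seq V), measurable [set z | [seq g z i | i <- t] = l].
Proof.
move=> mV mg; elim=> [|i t IH] [|v l] /=.
- by rewrite (_ : [set _ | _] = setT) //; apply/seteqP; split.
- by rewrite (_ : [set _ | _] = set0) //; apply/seteqP; split.
- by rewrite (_ : [set _ | _] = set0) //; apply/seteqP; split.
- rewrite (_ : [set _ | _] = g ^~ i @^-1` [set v] `&` [set z | [seq g z i | i <- t] = l]).
    by apply: measurableI => //; rewrite -[X in measurable X]setTI; exact: mg.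
  by apply/seteqP; split => z /= [-> ->].
Qed.

Section decoder_graph.
Variables (R : realType) (dI dZ : measure_display).
Variables (I : measurableType dI) (Z : measurableType dZ).

Lemma dec_case_fst (g : Z -> I -> R) t z : map fst (dec_case g t z) = t.
Proof. by rewrite -map_comp map_id. Qed.

Lemma dec_case_snd (g : Z -> I -> R) t z :
  map snd (dec_case g t z) = [seq g z i | i <- t].
Proof. by rewrite -map_comp. Qed.

Lemma dec_joint_off_graph (pI : {measure set (seqM I) -> \bar R})
    (pz : {sigma_finite_measure set Z -> \bar R}) (g : Z -> I -> R)
    (A : set (cases I R * Z)) :
  (forall s z, A (s, z) -> [seq g z i | i <- map fst s] <> map snd s) ->
  dec_joint pI pz g A = 0%E.
Proof.
move=> offA; rewrite /dec_joint (_ : [set _ | _] = set0) ?measure0 //.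
apply/seteqP; split => -[t z] // /offA /=.
by rewrite dec_case_fst dec_case_snd.
Qed.

End decoder_graph.

Lemma enc_joint_setX1 d dZ (I : measurableType d) (R : realType)
    (Z : measurableType dZ) (pD : {measure set (cases I R) -> \bar R})
    (q : cases I R -> {measure set Z -> \bar R}) (s0 : cases I R) (B : set Z) :
  measurable [set s0] ->
  enc_joint pD q ([set s0] `*` B) = (q s0 B * pD [set s0])%E.
Proof.
move=> ms0; rewrite /enc_joint.
have -> : (fun s => q s (xsection ([set s0] `*` B) s)) =
          (fun s => q s0 B * (\1_[set s0] s)%:E)%E.
  apply: funext => s; have [->|ns] := pselect (s = s0).
    by rewrite indicE mem_set // mule1 in_xsectionX ?inE.
  by rewrite indicE memNset // mule0 notin_xsectionX ?measure0 // notin_setE.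
rewrite ge0_integralZl //.
- by rewrite integral_indic // setIT.
- by apply/measurable_realfun.measurable_EFinP; exact: measurable_realfun.measurable_indic.
Qed.

Theorem proposition2 (R : realType)
  (dI : measure_display) (I : measurableType dI)
  (dZ : measure_display) (Z : measurableType dZ)
  (pD : probability (cases I R) R) (pI : probability (seqM I) R)
  (pz : probability Z R) (g : Z -> I -> R)
  (q : R.-pker (cases I R) ~> Z) :
  measurable_fun setT (fun p : Z * I => g p.1 p.2) ->
  (forall A : set (seqM I), measurable A ->
     pI A = pD [set s : cases I R | A (map fst s)]) ->
  (forall A : set (cases I R * Z), measurable A ->
     enc_joint pD q A = dec_joint pI pz g A) ->
  forall s0 : cases I R, measurable [set s0] -> (0 < pD [set s0])%E ->
  {ae q s0, forall z, [seq g z i | i <- map fst s0] = map snd s0}.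
Proof.
move=> mg _ enc_dec s0 ms0 ps0.
set N := ~` [set z | [seq g z i | i <- map fst s0] = map snd s0].
have mN : measurable N.
  apply/measurableC/measurable_map_eq => [v|i]; first exact: measurable_set1.
  exact: (measurable_fun_pair1 i mg).
have := enc_dec _ (measurableX ms0 mN).
rewrite enc_joint_setX1 // dec_joint_off_graph; last by move=> s z [/= -> ?].
by move/eqP; rewrite mule_eq0 (gt_eqF ps0) orbF => /eqP qN0; exists N; split.
Qed.
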